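(* Let $d, d' \ge 1$ and $n \ge 1$ be integers, and let $\mathbb{K}=\mathbb{Q}=\{h_1,\dots,h_n\}\subset\mathbb{R}^d$ be any set of node representations. Consider the GAT family of scoring functions $\mathcal{F}_{\mathrm{GAT}}=\{e_{a,W} : a\in\mathbb{R}^{2d'},\ W\in\mathbb{R}^{d'\times d}\}$, where $$e_{a,W}(h_i,h_j)=\mathrm{LeakyReLU}\big(a^{\top}[\,W h_i \,\|\, W h_j\,]\big),$$ with attention coefficients $\alpha_{ij}=\exp(e(h_i,h_j))/\sum_{j'}\exp(e(h_i,h_{j'}))$ obtained by softmax normalization over keys. Then this family computes static attention for $\mathbb{K}$ and $\mathbb{Q}$. In particular, if $n>1$, it does not compute dynamic attention for $\mathbb{K}$ and $\mathbb{Q}$.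
   Context: Here $\|$ denotes vector concatenation and $\mathrm{LeakyReLU}(x)=x$ for $x\ge 0$ and $\mathrm{LeakyReLU}(x)=cx$ for $x<0$ with a fixed slope $0<c<1$. Write $[n]=\{1,\dots,n\}$. Static scoring: a family $\mathcal{F}$ of functions $\mathbb{R}^d\times\mathbb{R}^d\to\mathbb{R}$ computes static scoring for keys $\{k_1,\dots,k_n\}$ and queries $\{q_1,\dots,q_m\}$ if for every $f\in\mathcal{F}$ there is an index $j_f\in[n]$ such that $f(q_i,k_{j_f})\ge f(q_i,k_j)$ for all $i\in[m]$, $j\in[n]$. Dynamic scoring: $\mathcal{F}$ computes dynamic scoring for these keys and queries if for every map $\varphi:[m]\to[n]$ there is $f\in\mathcal{F}$ such that $f(q_i,k_{\varphi(i)})>f(q_i,k_j)$ for all $i\in[m]$ and all $j\in[n]$ with $j\neq\varphi(i)$. A family of attention functions computes static (resp. dynamic) attention if its scoring function family computes static (resp. dynamic) scoring, possibly followed by a monotonic normalization such as softmax. *)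

From HB Require Import structures.
From mathcomp Require Import all_boot all_order all_algebra.
Set Implicit Arguments. Unset Strict Implicit. Unset Printing Implicit Defensive.
Import Order.TTheory GRing.Theory Num.Theory.
Local Open Scope ring_scope.

Definition leaky_relu (R : realFieldType) (c x : R) : R :=
  if 0 <= x then x else c * x.

(* GAT scoring function e_{a,W}(h_i,h_j) = LeakyReLU(a^T [W h_i || W h_j]).
   Vectors in R^d are column vectors 'cV[R]_d; a : R^{2d'} = 'cV_(d' + d'),
   and || is col_mx (vertical concatenation). *)
Definition gat_score (R : realFieldType) (c : R) (d d' : nat)
    (a : 'cV[R]_(d' + d')) (W : 'M[R]_(d', d)) (hi hj : 'cV[R]_d) : R :=
  leaky_relu c ((a^T *m col_mx (W *m hi) (W *m hj)) 0 0).

Definition static_scoring (R : realFieldType) (P X : Type) (fam : P -> X -> X -> R)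
    (n m : nat) (k : 'I_n -> X) (q : 'I_m -> X) : Prop :=
  forall p : P, exists jf : 'I_n,
    forall (i : 'I_m) (j : 'I_n), fam p (q i) (k j) <= fam p (q i) (k jf).

Definition dynamic_scoring (R : realFieldType) (P X : Type) (fam : P -> X -> X -> R)
    (n m : nat) (k : 'I_n -> X) (q : 'I_m -> X) : Prop :=
  forall phi : 'I_m -> 'I_n, exists p : P,
    forall (i : 'I_m) (j : 'I_n), j != phi i ->
      fam p (q i) (k j) < fam p (q i) (k (phi i)).

Definition gat_family (R : realFieldType) (c : R) (d d' : nat) :
    ('cV[R]_(d' + d') * 'M[R]_(d', d)) -> 'cV[R]_d -> 'cV[R]_d -> R :=
  fun p => gat_score c p.1 p.2.

(* A family of attention functions computes static/dynamic attention iff its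
   scoring family computes static/dynamic scoring (normalization such as
   softmax is monotone and does not affect this, per the paper's definition). *)
Definition computes_static_attention (R : realFieldType) (P X : Type)
    (fam : P -> X -> X -> R) n m (k : 'I_n -> X) (q : 'I_m -> X) :=
  static_scoring fam k q.
Definition computes_dynamic_attention (R : realFieldType) (P X : Type)
    (fam : P -> X -> X -> R) n m (k : 'I_n -> X) (q : 'I_m -> X) :=
  dynamic_scoring fam k q.
Arguments gat_family {R} c d d' _ _ _.

From HB Require Import structures.
From mathcomp Require Import all_boot all_order all_algebra.
From mathcomp Require Import lra.
Import Order.TTheory GRing.Theory Num.Theory.
Local Open Scope ring_scope.

(* A GAT score is LeakyReLU of (query term + key term), and LeakyReLU is
   monotone, so for fixed parameters the ranking of the keys is the ranking of
   their key terms, whatever the query: one key maximizing the key term is a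
   top key for every query.  Dynamic scoring, on the other hand, must realize
   a map sending two queries to two different strict top keys. *)

Lemma leaky_relu_homo (R : realFieldType) (c : R) : 0 <= c ->
  {homo leaky_relu c : x y / x <= y}.
Proof.
rewrite /leaky_relu => c_ge0 x y le_xy.
by case: (lerP 0 x) => x0; case: (lerP 0 y) => y0; nra.
Qed.

Lemma gat_scoreE (R : realFieldType) (c : R) (d d' : nat)
    (a : 'cV[R]_(d' + d')) (W : 'M[R]_(d', d)) (hi hj : 'cV[R]_d) :
  gat_score c a W hi hj =
  leaky_relu c ((lsubmx a^T *m (W *m hi)) 0 0 + (rsubmx a^T *m (W *m hj)) 0 0).
Proof. by rewrite /gat_score -[a^T]hsubmxK mul_row_col mxE row_mxKl row_mxKr. Qed.

Section KeyMonotoneScoring.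

Variables (R : realFieldType) (P X : Type) (fam : P -> X -> X -> R).
Variables (n m : nat) (k : 'I_n -> X) (q : 'I_m -> X).

Lemma static_scoring_key_monotone (g : P -> X -> R -> R) (t : P -> X -> R) :
  (0 < n)%N ->
  (forall p x, {homo g p x : u v / u <= v}) ->
  (forall p x y, fam p x y = g p x (t p y)) ->
  static_scoring fam k q.
Proof.
move=> n_gt0 g_homo famE p.
have [jf _ jf_max] := @arg_maxP _ R _ (Ordinal n_gt0) xpredT (fun j => t p (k j)) isT.
by exists jf => i j; rewrite !famE; apply/g_homo/jf_max.
Qed.

Lemma static_scoring_not_dynamic : (1 < m)%N -> (1 < n)%N ->
  static_scoring fam k q -> ~ dynamic_scoring fam k q.
Proof.
move=> m_gt1 n_gt1 static dynamic.
pose i0 : 'I_m := Ordinal (ltnW m_gt1).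
pose j0 : 'I_n := Ordinal (ltnW n_gt1).
pose j1 : 'I_n := Ordinal n_gt1.
have [p phi_strict] := dynamic (fun i => if i == i0 then j0 else j1).
have [jf jf_max] := static p.
have top_key i : jf = if i == i0 then j0 else j1.
  apply/eqP; apply: contraT => /(phi_strict i).
  by rewrite ltNge jf_max.
by move: (top_key i0) (top_key (Ordinal m_gt1)); rewrite eqxx => -> /=.
Qed.

End KeyMonotoneScoring.

Lemma gat_static_scoring (R : realFieldType) (c : R) (d d' n m : nat)
    (k : 'I_n -> 'cV[R]_d) (q : 'I_m -> 'cV[R]_d) :
  0 <= c -> (0 < n)%N -> static_scoring (gat_family c d d') k q.
Proof.
move=> c_ge0 n_gt0.
apply: (@static_scoring_key_monotone _ _ _ _ _ _ k q
  (fun p x u => leaky_relu c ((lsubmx p.1^T *m (p.2 *m x)) 0 0 + u))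
  (fun p y => (rsubmx p.1^T *m (p.2 *m y)) 0 0)) => //.
- by move=> p x u v le_uv; apply: leaky_relu_homo => //; rewrite lerD2l.
- by move=> p x y; apply: gat_scoreE.
Qed.

Theorem theorem1 (R : realFieldType) (c : R) (hc0 : 0 < c) (hc1 : c < 1)
    (d d' n : nat) (hd : (1 <= d)%N) (hd' : (1 <= d')%N) (hn : (1 <= n)%N)
    (h : 'I_n -> 'cV[R]_d) :
  computes_static_attention (gat_family c d d') h h /\
  ((1 < n)%N -> ~ computes_dynamic_attention (gat_family c d d') h h).
Proof.
have static := @gat_static_scoring R c d d' n n h h (ltW hc0) hn.
split=> [|n_gt1]; first exact: static.
exact: (@static_scoring_not_dynamic R _ _ _ n n h h n_gt1 n_gt1 static).
Qed.
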